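(* $|\mathsf{Agg}|=2^{\mathfrak{c}}$, where $\mathfrak{c}=2^{\aleph_0}$.
   Context: An $n$-ary aggregation function on $[0,1]$ is a function $f\colon[0,1]^n\to[0,1]$ nondecreasing in each coordinate with $f(0,\dots,0)=0$ and $f(1,\dots,1)=1$; $\mathsf{Agg}$ is the set of all aggregation functions of all finite arities $n\in\mathbb{N}$. *)

From Stdlib Require Import Reals.
Open Scope R_scope.

Definition I01 : Type := {x : R | 0 <= x <= 1}.

Definition Idx (n : nat) : Type := {i : nat | (i < n)%nat}.

Definition cube (n : nat) : Type := Idx n -> I01.

Definition cst (n : nat) (c : I01) : cube n := fun _ => c.

Lemma zero_in01 : 0 <= 0 <= 1.
Proof. split; [apply Rle_refl | apply Rle_0_1]. Qed.
Lemma one_in01 : 0 <= 1 <= 1.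
Proof. split; [apply Rle_0_1 | apply Rle_refl]. Qed.

Definition I0 : I01 := exist _ 0 zero_in01.
Definition I1 : I01 := exist _ 1 one_in01.

Definition is_agg (n : nat) (f : cube n -> I01) : Prop :=
  (forall x y : cube n,
      (forall i, proj1_sig (x i) <= proj1_sig (y i)) ->
      proj1_sig (f x) <= proj1_sig (f y)) /\
  f (cst n I0) = I0 /\ f (cst n I1) = I1.

Definition Agg : Type := {n : nat & {f : cube n -> I01 | is_agg n f}}.

(* Agg injects into the subsets of R: an aggregation function is determined by its
   graph, a subset of the union over n of [0,1]^n x [0,1]; a point of that union is coded
   by a binary stream (arity, then Dedekind cuts over the rationals of the value and of
   the coordinates, interleaved by Cantor pairing), and binary streams inject into R by
   ternary expansion.  Conversely the antidiagonal x0 + x1 = 1 of [0,1]^2 is an antichain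
   containing a copy of R, so for every S a binary function that is 0 below it, 1 above it
   and the indicator of S on it is an aggregation function.  Schroeder-Bernstein turns the
   two injections into a bijection. *)

From Stdlib Require Import Reals Lra Lia ClassicalEpsilon ProofIrrelevance
  FunctionalExtensionality Cantor Eqdep_dec Compare_dec.

Open Scope R_scope.

Section SchroederBernstein.

Variables (A B : Type) (f : A -> B) (g : B -> A).
Hypotheses (f_inj : forall a a', f a = f a' -> a = a')
           (g_inj : forall b b', g b = g b' -> b = b').

Fixpoint chain_from_A (n : nat) (a : A) : Prop :=
  match n with
  | O => ~ (exists b, g b = a)
  | S k => exists a', chain_from_A k a' /\ a = g (f a')
  end.

Definition g_inv (a : A) : B :=
  match excluded_middle_informative (exists b, g b = a) with
  | left H => proj1_sig (constructive_indefinite_description _ H)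
  | right _ => f a
  end.

Lemma g_inv_spec a : (exists b, g b = a) -> g (g_inv a) = a.
Proof.
  intro H. unfold g_inv. destruct (excluded_middle_informative _) as [H'|H'].
  - exact (proj2_sig (constructive_indefinite_description _ H')).
  - contradiction.
Qed.

Lemma range_g_of_not_chain a : ~ (exists n, chain_from_A n a) -> exists b, g b = a.
Proof.
  intro Ha. destruct (excluded_middle_informative (exists b, g b = a)) as [H|H]; auto.
  exfalso. apply Ha. exists O. exact H.
Qed.

Definition bernstein_map (a : A) : B :=
  if excluded_middle_informative (exists n, chain_from_A n a) then f a else g_inv a.

Lemma bernstein_map_inj a a' : bernstein_map a = bernstein_map a' -> a = a'.
Proof.
  assert (mixed : forall a a', (exists n, chain_from_A n a) ->
                    ~ (exists n, chain_from_A n a') -> f a <> g_inv a').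
  { intros x x' [n Hn] Hx' E. apply Hx'. exists (S n). exists x. split; auto.
    rewrite E. symmetry. apply g_inv_spec, range_g_of_not_chain, Hx'. }
  unfold bernstein_map.
  destruct (excluded_middle_informative (exists n, chain_from_A n a)) as [Ha|Ha];
  destruct (excluded_middle_informative (exists n, chain_from_A n a')) as [Ha'|Ha'].
  - apply f_inj.
  - intro E. destruct (mixed a a' Ha Ha' E).
  - intro E. destruct (mixed a' a Ha' Ha (eq_sym E)).
  - intro E. rewrite <- (g_inv_spec a), <- (g_inv_spec a'), E;
      auto using range_g_of_not_chain.
Qed.

Lemma bernstein_map_surj b : exists a, bernstein_map a = b.
Proof.
  unfold bernstein_map.
  destruct (excluded_middle_informative (exists n, chain_from_A n (g b))) as [[n Hn]|Hn].
  - destruct n as [|n]; simpl in Hn.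
    + exfalso. apply Hn. exists b. reflexivity.
    + destruct Hn as [a [Ha E]]. exists a.
      destruct (excluded_middle_informative _) as [_|C].
      * apply g_inj. symmetry. exact E.
      * exfalso. apply C. exists n. exact Ha.
  - exists (g b). destruct (excluded_middle_informative _) as [C|_]; [contradiction|].
    apply g_inj, g_inv_spec. exists b. reflexivity.
Qed.

Theorem schroeder_bernstein :
  exists h : A -> B, (forall a a', h a = h a' -> a = a') /\ (forall b, exists a, h a = b).
Proof. exists bernstein_map. split; [exact bernstein_map_inj | exact bernstein_map_surj]. Qed.

End SchroederBernstein.

Definition ternary_digit (s : nat -> bool) (k : nat) : R :=
  if s k then 2 / 3 ^ S k else 0.

Fixpoint ternary_partial (s : nat -> bool) (n : nat) : R :=
  match n with
  | O => 0
  | S k => ternary_partial s k + ternary_digit s k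
  end.

Lemma ternary_digit_bounds s k : 0 <= ternary_digit s k <= / 3 ^ k - / 3 ^ S k.
Proof.
  assert (p_pos : 0 < 3 ^ k) by (apply pow_lt; lra).
  assert (inv_pos : 0 < / 3 ^ k) by (apply Rinv_0_lt_compat; lra).
  assert (inv_S : / 3 ^ S k = / 3 * / 3 ^ k) by (simpl; field; lra).
  unfold ternary_digit; rewrite inv_S; destruct (s k); [unfold Rdiv; rewrite inv_S|]; lra.
Qed.

Lemma ternary_partial_window s k d :
  ternary_partial s k <= ternary_partial s (k + d) <= ternary_partial s k + / 3 ^ k - / 3 ^ (k + d).
Proof.
  induction d as [|d IH].
  - rewrite Nat.add_0_r. lra.
  - rewrite Nat.add_succ_r. simpl ternary_partial.
    pose proof (ternary_digit_bounds s (k + d)). simpl pow in *. lra.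
Qed.

Lemma ternary_partial_le s k n : ternary_partial s n <= ternary_partial s k + / 3 ^ k.
Proof.
  destruct (Nat.le_gt_cases n k) as [Hnk|Hkn].
  - replace k with (n + (k - n))%nat by lia.
    pose proof (ternary_partial_window s n (k - n)).
    assert (0 < / 3 ^ (n + (k - n))) by (apply Rinv_0_lt_compat, pow_lt; lra). lra.
  - replace n with (k + (n - k))%nat by lia.
    pose proof (ternary_partial_window s k (n - k)).
    assert (0 < / 3 ^ (k + (n - k))) by (apply Rinv_0_lt_compat, pow_lt; lra). lra.
Qed.

Lemma ternary_partial_agree s t k :
  (forall j, (j < k)%nat -> s j = t j) -> ternary_partial s k = ternary_partial t k.
Proof.
  induction k as [|k IH]; intro H; simpl; auto.
  unfold ternary_digit. rewrite IH, (H k); auto.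
Qed.

Lemma ternary_ex s : { x : R | is_lub (fun z => exists n, z = ternary_partial s n) x }.
Proof.
  apply completeness.
  - exists (ternary_partial s 0 + / 3 ^ 0). intros z [n ->]. apply ternary_partial_le.
  - exists (ternary_partial s 0). exists O. reflexivity.
Qed.

Definition ternary (s : nat -> bool) : R := proj1_sig (ternary_ex s).

Lemma ternary_partial_le_ternary s n : ternary_partial s n <= ternary s.
Proof. apply (proj1 (proj2_sig (ternary_ex s))). exists n. reflexivity. Qed.

Lemma ternary_le_partial s k : ternary s <= ternary_partial s k + / 3 ^ k.
Proof.
  apply (proj2 (proj2_sig (ternary_ex s))). intros z [n ->]. apply ternary_partial_le.
Qed.

Lemma ternary_in01 s : 0 <= ternary s <= 1.
Proof.
  pose proof (ternary_partial_le_ternary s 0). pose proof (ternary_le_partial s 0).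
  simpl in *. lra.
Qed.

(* Digit [2] at the first difference outweighs everything a [0] there can be followed by. *)
Lemma ternary_lt_first_diff s t k :
  (forall j, (j < k)%nat -> s j = t j) -> s k = true -> t k = false -> ternary t < ternary s.
Proof.
  intros agree sk tk.
  pose proof (ternary_partial_le_ternary s (S k)) as lower.
  pose proof (ternary_le_partial t (S k)) as upper.
  simpl ternary_partial in lower, upper.
  rewrite (ternary_partial_agree s t k agree) in lower.
  unfold ternary_digit in lower, upper. rewrite sk in lower. rewrite tk in upper.
  assert (0 < / 3 ^ S k) by (apply Rinv_0_lt_compat, pow_lt; lra).
  unfold Rdiv in lower. lra.
Qed.

Lemma ternary_inj s t : ternary s = ternary t -> s = t.
Proof.
  intro E.
  assert (agree : forall k j, (j < k)%nat -> s j = t j).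
  { induction k as [|k IH]; intros j Hj; [lia|].
    destruct (Nat.lt_ge_cases j k) as [Hjk|Hkj]; [auto|].
    replace j with k by lia.
    destruct (s k) eqn:sk, (t k) eqn:tk; auto.
    - pose proof (ternary_lt_first_diff s t k IH sk tk). lra.
    - assert (IH' : forall j, (j < k)%nat -> t j = s j) by (intros; symmetry; auto).
      pose proof (ternary_lt_first_diff t s k IH' tk sk). lra. }
  extensionality k. apply (agree (S k)). lia.
Qed.

Section DedekindCut.

Variable q : nat -> R.
Hypothesis q_dense : forall x y, x < y -> exists m, x <= q m < y.

Definition cut (r : R) (m : nat) : bool := if Rlt_dec (q m) r then true else false.

Lemma cut_lt r r' : r < r' -> cut r <> cut r'.
Proof.
  intros Hr E. destruct (q_dense r r' Hr) as [m Hm].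
  apply (f_equal (fun c => c m)) in E. unfold cut in E.
  destruct (Rlt_dec (q m) r), (Rlt_dec (q m) r'); try discriminate; lra.
Qed.

Lemma cut_inj r r' : cut r = cut r' -> r = r'.
Proof.
  intro E. destruct (Rtotal_order r r') as [H|[H|H]]; auto.
  - destruct (cut_lt r r' H E).
  - destruct (cut_lt r' r H (eq_sym E)).
Qed.

End DedekindCut.

Definition pack (s : nat -> nat -> bool) : nat -> bool :=
  fun k => let (i, m) := Cantor.of_nat k in s i m.

Lemma pack_to_nat s i m : pack s (Cantor.to_nat (i, m)) = s i m.
Proof. unfold pack. rewrite Cantor.cancel_of_to. reflexivity. Qed.

Lemma pack_inj s t : pack s = pack t -> s = t.
Proof.
  intro E. extensionality i. extensionality m.
  rewrite <- !pack_to_nat, E. reflexivity.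
Qed.

Definition rat_enum (m : nat) : R :=
  let (a, r) := Cantor.of_nat m in
  let (b, d) := Cantor.of_nat r in (INR a - INR b) / INR (S d).

Lemma rat_enum_to_nat a b d :
  rat_enum (Cantor.to_nat (a, Cantor.to_nat (b, d))) = (INR a - INR b) / INR (S d).
Proof. unfold rat_enum. rewrite !Cantor.cancel_of_to. reflexivity. Qed.

Lemma IZR_as_INR_diff z : IZR z = INR (Z.to_nat z) - INR (Z.to_nat (- z)).
Proof. rewrite !INR_IZR_INZ, <- minus_IZR. f_equal. lia. Qed.

Lemma rat_enum_dense x y : x < y -> exists m, x <= rat_enum m < y.
Proof.
  intro Hxy. destruct (archimed_cor1 (y - x)) as [N [HN HN0]]; [lra|].
  destruct (archimed (x * INR N)) as [H1 H2].
  set (z := up (x * INR N)) in *.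
  (* [z / N] lies in [(x, x + 1/N]]. *)
  exists (Cantor.to_nat (Z.to_nat z, Cantor.to_nat (Z.to_nat (- z), pred N))).
  rewrite rat_enum_to_nat. replace (S (pred N)) with N by lia. rewrite <- IZR_as_INR_diff.
  assert (N_pos : 0 < INR N) by (apply lt_0_INR; lia).
  set (w := / INR N) in *. assert (Hw : w * INR N = 1) by (unfold w; field; lra).
  assert (Hz : IZR z / INR N * INR N = IZR z) by (field; lra).
  set (v := IZR z / INR N) in *.
  split; nra.
Qed.

Definition real_code : R -> nat -> bool := cut rat_enum.

Lemma real_code_inj r r' : real_code r = real_code r' -> r = r'.
Proof. apply cut_inj, rat_enum_dense. Qed.

Definition decide (P : Prop) : bool :=
  if excluded_middle_informative P then true else false.

Lemma decide_true P : decide P = true <-> P.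
Proof.
  unfold decide. destruct (excluded_middle_informative P); split; auto; discriminate.
Qed.

Lemma decide_inj P Q : decide P = decide Q -> (P <-> Q).
Proof.
  unfold decide.
  destruct (excluded_middle_informative P), (excluded_middle_informative Q);
    intuition discriminate.
Qed.

Lemma I01_eq (u v : I01) : proj1_sig u = proj1_sig v -> u = v.
Proof. destruct u, v; simpl; intros ->; f_equal; apply proof_irrelevance. Qed.

(* Stream [0] records the arity, stream [1] the value, stream [j + 2] the coordinate [j]. *)
Definition point_code (n : nat) (x : cube n) (y : R) : nat -> bool :=
  pack (fun i => match i with
                 | O => fun m => Nat.eqb m n
                 | 1%nat => real_code y
                 | S (S j) => match lt_dec j n with
                              | left h => real_code (proj1_sig (x (exist _ j h)))
                              | right _ => fun _ => false
                              end
                 end).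

Lemma point_code_arity n n' x x' y y' : point_code n x y = point_code n' x' y' -> n = n'.
Proof.
  intro E. apply (f_equal (fun c => c (Cantor.to_nat (O, n)))) in E.
  unfold point_code in E. rewrite !pack_to_nat, Nat.eqb_refl in E.
  symmetry in E. apply Nat.eqb_eq in E. auto.
Qed.

Lemma point_code_inj n x x' y y' : point_code n x y = point_code n x' y' -> x = x' /\ y = y'.
Proof.
  intro E. apply pack_inj in E. split.
  - extensionality i. destruct i as [j hj]. apply I01_eq, real_code_inj.
    apply (f_equal (fun s => s (S (S j)))) in E. simpl in E.
    destruct (lt_dec j n) as [h|h]; [|contradiction].
    rewrite (proof_irrelevance _ hj h). exact E.
  - apply real_code_inj. exact (f_equal (fun s => s 1%nat) E).
Qed.

Section GraphCode.

Variables (X : nat -> Type) (Y B : Type) (code : forall n, X n -> Y -> B).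
Hypotheses (X_inhabited : forall n, X n)
           (code_arity : forall n n' x x' y y', code n x y = code n' x' y' -> n = n')
           (code_inj : forall n x x' y y', code n x y = code n x' y' -> x = x' /\ y = y').

Definition graph_code (f : {n & X n -> Y}) (b : B) : Prop :=
  exists x, code (projT1 f) x (projT2 f x) = b.

Lemma graph_code_inj f g : (forall b, graph_code f b <-> graph_code g b) -> f = g.
Proof.
  destruct f as [n f], g as [m g]. unfold graph_code; simpl. intro same.
  assert (in_g : forall x, exists x', code m x' (g x') = code n x (f x))
    by (intro x; apply same; exists x; reflexivity).
  destruct (in_g (X_inhabited n)) as [x0 Hx0].
  apply code_arity in Hx0. subst m.
  f_equal. extensionality x. destruct (in_g x) as [x' Hx'].
  apply code_inj in Hx'. destruct Hx' as [-> ->]. reflexivity.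
Qed.

End GraphCode.

Definition agg_values (a : Agg) : {n & cube n -> R} :=
  existT _ (projT1 a) (fun x => proj1_sig (proj1_sig (projT2 a) x)).

Lemma agg_values_inj a b : agg_values a = agg_values b -> a = b.
Proof.
  destruct a as [n [f hf]], b as [m [g hg]]. unfold agg_values; simpl. intro E.
  assert (n = m) by exact (f_equal (@projT1 _ _) E). subst m.
  apply inj_pair2_eq_dec in E; [|exact Nat.eq_dec].
  assert (f = g).
  { extensionality x. apply I01_eq. exact (f_equal (fun h => h x) E). }
  subst g. rewrite (proof_irrelevance _ hf hg). reflexivity.
Qed.

Definition agg_code (a : Agg) (r : R) : bool :=
  decide (graph_code cube R R (fun n x y => ternary (point_code n x y)) (agg_values a) r).

Lemma agg_code_inj a b : agg_code a = agg_code b -> a = b.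
Proof.
  intro E. apply agg_values_inj.
  apply (graph_code_inj cube R R (fun n x y => ternary (point_code n x y))).
  - intro n. exact (cst n I0).
  - intros n n' x x' y y' H. exact (point_code_arity n n' x x' y y' (ternary_inj _ _ H)).
  - intros n x x' y y' H. exact (point_code_inj n x x' y y' (ternary_inj _ _ H)).
  - intro r. apply decide_inj. exact (f_equal (fun c => c r) E).
Qed.

Definition I01_of_bool (b : bool) : I01 := if b then I1 else I0.

Lemma compl_in01 (u : I01) : 0 <= 1 - proj1_sig u <= 1.
Proof. destruct u as [v Hv]; simpl; lra. Qed.

Definition I01_compl (u : I01) : I01 := exist _ (1 - proj1_sig u) (compl_in01 u).

Definition real_to_I01 (r : R) : I01 := exist _ (ternary (real_code r)) (ternary_in01 _).

Lemma real_to_I01_inj r r' : real_to_I01 r = real_to_I01 r' -> r = r'.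
Proof.
  intro E. apply real_code_inj, ternary_inj. exact (f_equal (@proj1_sig _ _) E).
Qed.

Definition idx0 : Idx 2 := exist _ 0%nat Nat.lt_0_2.
Definition idx1 : Idx 2 := exist _ 1%nat Nat.lt_1_2.

(* The antidiagonal [x0 + x1 = 1] is an antichain, so monotonicity puts no constraint
   on the values chosen there. *)
Definition antidiagonal_agg (S : R -> bool) (x : cube 2) : I01 :=
  let u := proj1_sig (x idx0) + proj1_sig (x idx1) in
  if Rlt_dec u 1 then I0
  else if Rlt_dec 1 u then I1
  else I01_of_bool (decide (exists r, real_to_I01 r = x idx0 /\ S r = true)).

Lemma antidiagonal_agg_is_agg S : is_agg 2 (antidiagonal_agg S).
Proof.
  split; [|split].
  - intros x y Hxy. pose proof (Hxy idx0). pose proof (Hxy idx1). unfold antidiagonal_agg.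
    destruct (Rlt_dec (proj1_sig (x idx0) + proj1_sig (x idx1)) 1).
    { apply (proj2_sig (antidiagonal_agg S y)). }
    destruct (Rlt_dec (proj1_sig (y idx0) + proj1_sig (y idx1)) 1); [lra|].
    destruct (Rlt_dec 1 (proj1_sig (y idx0) + proj1_sig (y idx1))).
    { destruct (Rlt_dec 1 _); [apply Rle_refl|apply (proj2_sig (I01_of_bool _))]. }
    destruct (Rlt_dec 1 (proj1_sig (x idx0) + proj1_sig (x idx1))); [lra|].
    assert (same_first : x idx0 = y idx0) by (apply I01_eq; lra).
    rewrite same_first. apply Rle_refl.
  - unfold antidiagonal_agg, cst; simpl. destruct (Rlt_dec _ _); [reflexivity|lra].
  - unfold antidiagonal_agg, cst; simpl.
    destruct (Rlt_dec _ _); [lra|]. destruct (Rlt_dec _ _); [reflexivity|lra].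
Qed.

Definition antidiagonal_point (u : I01) : cube 2 :=
  fun i => match proj1_sig i with O => u | _ => I01_compl u end.

Lemma antidiagonal_agg_at S r :
  antidiagonal_agg S (antidiagonal_point (real_to_I01 r)) = I01_of_bool (S r).
Proof.
  unfold antidiagonal_agg, antidiagonal_point; simpl.
  destruct (Rlt_dec _ _); [lra|]. destruct (Rlt_dec _ _); [lra|].
  f_equal. destruct (S r) eqn:Sr.
  - apply decide_true. exists r. auto.
  - destruct (decide _) eqn:D; [|reflexivity].
    destruct (proj1 (decide_true _) D) as [r' [E Sr']].
    apply real_to_I01_inj in E. subst r'. congruence.
Qed.

Definition agg_of_set (S : R -> bool) : Agg :=
  existT _ 2%nat (exist _ (antidiagonal_agg S) (antidiagonal_agg_is_agg S)).

Lemma agg_of_set_inj S T : agg_of_set S = agg_of_set T -> S = T.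
Proof.
  intro E. apply inj_pair2_eq_dec in E; [|exact Nat.eq_dec].
  apply (f_equal (@proj1_sig _ _)) in E. simpl in E.
  extensionality r. pose proof (f_equal (fun F => F (antidiagonal_point (real_to_I01 r))) E) as Er.
  simpl in Er. rewrite !antidiagonal_agg_at in Er.
  destruct (S r), (T r); auto; apply (f_equal (@proj1_sig _ _)) in Er; simpl in Er; lra.
Qed.

Theorem lemma6 :
  exists F : Agg -> (R -> bool),
    (forall a b : Agg, F a = F b -> a = b) /\
    (forall S : R -> bool, exists a : Agg, F a = S).
Proof.
  exact (schroeder_bernstein Agg (R -> bool) agg_code agg_of_set agg_code_inj agg_of_set_inj).
Qed.
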